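(* Let $L\in R[x][\partial]$ have positive order and let $c$ be a non-unit element of $R$. If $L$ is $R$-primitive and $c$ divides $\mathrm{lc}_\partial(L)$, then $c$ divides $\mathrm{lc}_\partial(Q)$ for every $Q\in\mathrm{cont}(L)\setminus\{0\}$.
   Context: $R$ is a principal ideal domain with quotient field $Q_R$; $\sigma$ is an $R$-automorphism of $R[x]$ with $\sigma(x)=\gamma x+\tau$ ($\gamma,\tau\in R$, $\gamma$ a unit), $\delta$ an $R$-linear $\sigma$-derivation of $R[x]$ ($\delta(fg)=\sigma(f)\delta(g)+\delta(f)g$) with $\deg\delta(x)\le1$; $R[x][\partial]$ is the Ore algebra with $\partial p=\sigma(p)\partial+\delta(p)$, inside $Q_R(x)[\partial]$. $\mathrm{lc}_\partial$ denotes the leading coefficient with respect to $\partial$, and $\mathrm{cont}(L)=Q_R(x)[\partial]L\cap R[x][\partial]$. Writing $L=a_kf_k\partial^k+\dots+a_0f_0$ with $a_i\in R$ and $f_i\in R[x]$ primitive (gcd of coefficients $1$), $L$ is $R$-primitive if $\gcd(a_0,\dots,a_k)=1$. *)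

From HB Require Import structures.
From mathcomp Require Import all_boot all_order all_algebra.
Set Implicit Arguments.
Unset Strict Implicit.
Unset Printing Implicit Defensive.
Import Order.TTheory GRing.Theory Num.Theory.
Local Open Scope ring_scope.

Definition dvdR (R : comNzRingType) (c a : R) : Prop := exists b, a = b * c.

Definition is_ideal (R : comNzRingType) (I : R -> Prop) : Prop :=
  [/\ I 0, (forall a b, I a -> I b -> I (a + b)) & (forall r a, I a -> I (r * a))].

Definition is_pid (R : idomainType) : Prop :=
  forall I : R -> Prop, is_ideal I -> exists g : R, forall r, I r <-> dvdR g r.

(* Ore polynomials over a coefficient ring K are represented as {poly K}
   (variable = \partial, coefficients written on the left:
    P = \sum_i P`_i \partial^i).  Multiplication uses the commutation rule
    \partial a = s(a) \partial + d(a). *)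
Section Ore.
Variable K : comNzRingType.
Variables (s d : K -> K).

Definition ore_dmul (P : {poly K}) : {poly K} :=
  map_poly s P * 'X + map_poly d P.

Definition ore_mul (P Q : {poly K}) : {poly K} :=
  \sum_(i < size P) P`_i *: iter i ore_dmul Q.
End Ore.

Section FracExt.
Variable D : idomainType.
Definition fnum (x : {fraction D}) : D := \n_(repr x).
Definition fden (x : {fraction D}) : D := \d_(repr x).

Local Notation "x %:F" := (@FracField.tofrac D x).
Variables (s d : D -> D).
Definition sigmaF (x : {fraction D}) : {fraction D} :=
  (s (fnum x))%:F / (s (fden x))%:F.
(* Extension of the s-derivation d to Frac(D):
   d(n/m) = s(n) d(1/m) + d(n)/m  with  d(1/m) = - d(m) / (s(m) m). *)
Definition deltaF (x : {fraction D}) : {fraction D} :=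
  (d (fnum x))%:F / (fden x)%:F
  - (s (fnum x))%:F * (d (fden x))%:F / ((s (fden x))%:F * (fden x)%:F).
End FracExt.

Section OreRx.
Variable R : idomainType.
Variables (sigma delta : {poly R} -> {poly R}).

(* cont(L) = Q_R(x)[\partial] L  \cap  R[x][\partial],
   with Q_R(x) realized as Frac(R[x]). *)
Definition in_cont (L Q : {poly {poly R}}) : Prop :=
  exists T : {poly {fraction {poly R}}},
    map_poly (@FracField.tofrac {poly R}) Q =
    ore_mul (sigmaF sigma) (deltaF sigma delta) T (map_poly (@FracField.tofrac {poly R}) L).
End OreRx.

(* L is R-primitive: the gcd of all coefficients in R of L is 1, i.e.
   every common divisor in R of all R-coefficients of L is a unit. *)
Definition R_primitive (R : idomainType) (L : {poly {poly R}}) : Prop :=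
  forall r : R, (forall i j, dvdR r (L`_i)`_j) -> r \is a GRing.unit.

Definition dvdRP (R : idomainType) (c : R) (f : {poly R}) : Prop :=
  dvdR (c%:P) f.

From mathcomp Require Import all_boot all_algebra.
From mathcomp Require Import ring.
From Stdlib Require Import Classical ClassicalEpsilon.

(* Clearing denominators turns Q ∈ cont(L) into e Q = T L with 0 ≠ e ∈ R[x] and T ∈ R[x][∂].
   Gauss's lemma holds in R[x][∂]: a prime p of R stays prime there, because σ and δ preserve
   divisibility by p and lc(T L) = lc(T) σ^k(lc L). Since every nonunit of the PID R has a prime
   factor, products of R-primitive operators are R-primitive; hence the R-content of e divides T
   and e may be taken R-primitive. As σ fixes R, c divides lc(T) σ^k(lc L) = e lc(Q), and Gauss's
   lemma in R[x] gives c | lc(Q). *)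

Set Implicit Arguments.
Unset Strict Implicit.
Unset Printing Implicit Defensive.

Import GRing.Theory.
Local Open Scope ring_scope.

Lemma morph_add0 (V W : zmodType) (f : V -> W) : {morph f : x y / x + y} -> f 0 = 0.
Proof. by move=> fD; apply: (addrI (f 0)); rewrite -fD !addr0. Qed.

Section OreProduct.
Variables (K : comNzRingType) (s d : K -> K).
Local Notation dmul := (ore_dmul s d).
Local Notation omul := (ore_mul s d).

Lemma ore_mul_widen n (T L : {poly K}) : (size T <= n)%N ->
  omul T L = \sum_(i < n) T`_i *: iter i dmul L.
Proof.
move=> le_Tn; rewrite /ore_mul (big_ord_widen n (fun i => T`_i *: iter i dmul L) le_Tn).
rewrite big_mkcond /=; apply: eq_bigr => i _.
by case: ltnP => // le_Ti; rewrite nth_default // scale0r.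
Qed.

Lemma ore_mul0l (L : {poly K}) : omul 0 L = 0.
Proof. by rewrite /ore_mul size_poly0 big_ord0. Qed.

Lemma ore_mulZl (a : K) (T L : {poly K}) : omul (a *: T) L = a *: omul T L.
Proof.
rewrite (@ore_mul_widen (size T)) ?size_scale_leq // /ore_mul scaler_sumr.
by apply: eq_bigr => i _; rewrite coefZ scalerA.
Qed.

Lemma ore_mulDl (T1 T2 L : {poly K}) : omul (T1 + T2) L = omul T1 L + omul T2 L.
Proof.
set n := maxn (size T1) (size T2).
rewrite (@ore_mul_widen n (T1 + T2)) ?size_polyD // (@ore_mul_widen n T1) ?leq_maxl //.
rewrite (@ore_mul_widen n T2) ?leq_maxr // -big_split /=.
by apply: eq_bigr => i _; rewrite coefD scalerDl.
Qed.

Lemma ore_mulCC (a b : K) : omul a%:P b%:P = (a * b)%:P.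
Proof.
by rewrite (@ore_mul_widen 1) ?size_polyC ?leq_b1 // big_ord1 /= coefC scale_polyC.
Qed.

Hypothesis s_add : {morph s : x y / x + y}.
Hypothesis d_add : {morph d : x y / x + y}.

Lemma coef_ore_dmul (P : {poly K}) i :
  (dmul P)`_i = (if i == 0%N then 0 else s P`_i.-1) + d P`_i.
Proof. by rewrite coefD coefMX !coef_map_id0 ?morph_add0. Qed.

Lemma ore_dmulD : {morph dmul : P Q / P + Q}.
Proof.
move=> P Q; apply/polyP => i; rewrite coefD !coef_ore_dmul !coefD d_add.
by case: eqP => _; rewrite ?add0r ?s_add; ring.
Qed.

Lemma ore_mulDr (T : {poly K}) : {morph omul T : L1 L2 / L1 + L2}.
Proof.
move=> L1 L2; rewrite /ore_mul -big_split /=; apply: eq_bigr => i _.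
suff -> : iter i dmul (L1 + L2) = iter i dmul L1 + iter i dmul L2 by rewrite scalerDr.
by elim: (i : nat) => //= k ->; rewrite ore_dmulD.
Qed.

End OreProduct.

Section OreMap.
Variables (K K' : comNzRingType) (phi : {rmorphism K -> K'}).
Variables (s d : K -> K) (s' d' : K' -> K').
Hypotheses (s0 : s 0 = 0) (d0 : d 0 = 0).
Hypothesis s'phi : forall x, s' (phi x) = phi (s x).
Hypothesis d'phi : forall x, d' (phi x) = phi (d x).

Lemma map_ore_dmul (P : {poly K}) :
  map_poly phi (ore_dmul s d P) = ore_dmul s' d' (map_poly phi P).
Proof.
have s'0 : s' 0 = 0 by rewrite -(rmorph0 phi) s'phi s0 rmorph0.
have d'0 : d' 0 = 0 by rewrite -(rmorph0 phi) d'phi d0 rmorph0.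
rewrite /ore_dmul rmorphD rmorphM /= map_polyX; congr (_ * _ + _);
  by apply/polyP => i; rewrite !coef_map_id0 ?rmorph0 //= coef_map /= ?s'phi ?d'phi.
Qed.

Lemma map_ore_mul (T L : {poly K}) :
  map_poly phi (ore_mul s d T L) = ore_mul s' d' (map_poly phi T) (map_poly phi L).
Proof.
rewrite [RHS](@ore_mul_widen _ _ _ (size T)) ?size_poly //.
rewrite /ore_mul raddf_sum /=.
apply: eq_bigr => i _; rewrite map_polyZ coef_map; congr (_ *: _).
by elim: (i : nat) => //= k IH; rewrite map_ore_dmul IH.
Qed.

End OreMap.

Section OreLeadCoef.
Variables (K : idomainType) (s d : K -> K).
Hypothesis s0 : s 0 = 0.
Hypothesis s_neq0 : forall x, x != 0 -> s x != 0.
Local Notation dmul := (ore_dmul s d).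
Local Notation omul := (ore_mul s d).

Lemma ore_mul0r (T : {poly K}) : omul T 0 = 0.
Proof.
have iter_dmul0 k : iter k dmul 0 = 0.
  by elim: k => //= k ->; rewrite /ore_dmul !map_poly0 mul0r addr0.
by rewrite /ore_mul big1 // => i _; rewrite iter_dmul0 scaler0.
Qed.

Lemma size_lead_coef_ore_dmul (P : {poly K}) : P != 0 ->
  size (dmul P) = (size P).+1 /\ lead_coef (dmul P) = s (lead_coef P).
Proof.
move=> P0; have sP0 : map_poly s P != 0 by rewrite map_poly_eq0_id0 ?s_neq0 ?lead_coef_eq0.
have size_sPX : size (map_poly s P * 'X) = (size P).+1.
  by rewrite size_mulX // size_map_poly_id0 ?s_neq0 ?lead_coef_eq0.
have size_dP : (size (map_poly d P) < size (map_poly s P * 'X)%R)%N.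
  by rewrite size_sPX ltnS; apply: size_poly.
rewrite /ore_dmul size_polyDl // lead_coefDl // lead_coefMX.
by rewrite lead_coef_map_id0 ?s_neq0 ?lead_coef_eq0.
Qed.

Lemma size_lead_coef_iter_ore_dmul k (P : {poly K}) : P != 0 ->
  size (iter k dmul P) = (size P + k)%N /\
  lead_coef (iter k dmul P) = iter k s (lead_coef P).
Proof.
move=> P0; elim: k => [|k [IHs IHl]] /=; first by rewrite addn0.
have P'0 : iter k dmul P != 0 by rewrite -size_poly_gt0 IHs addn_gt0 size_poly_gt0 P0.
by have [-> ->] := size_lead_coef_ore_dmul P'0; rewrite IHs IHl addnS.
Qed.

Lemma lead_coef_ore_mul (T L : {poly K}) :
  lead_coef (omul T L) = lead_coef T * iter (size T).-1 s (lead_coef L).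
Proof.
have [->|T0] := eqVneq T 0; first by rewrite ore_mul0l !lead_coef0 mul0r.
have [->|L0] := eqVneq L 0.
  rewrite ore_mul0r !lead_coef0; suff -> : iter (size T).-1 s 0 = 0 by rewrite mulr0.
  by elim: (size T).-1 => //= k ->.
have [n sizeT] : {n | size T = n.+1} by exists (size T).-1; rewrite prednK ?size_poly_gt0.
have lcT : T`_n = lead_coef T by rewrite lead_coefE sizeT.
have [size_top lc_top] := size_lead_coef_iter_ore_dmul n L0.
have size_low : (size (\sum_(i < n) T`_i *: iter i dmul L)%R < size L + n)%N.
  rewrite -[(size L + n)%N]prednK ?addn_gt0 ?size_poly_gt0 ?L0 // ltnS.
  apply: (big_ind (fun p : {poly K} => size p <= (size L + n).-1)%N) => [||i _].
  - by rewrite size_poly0.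
  - by move=> p q le_p le_q; rewrite (leq_trans (size_polyD _ _)) // geq_max le_p le_q.
  - rewrite (leq_trans (size_scale_leq _ _)) //.
    have [-> _] := size_lead_coef_iter_ore_dmul i L0.
    by rewrite -ltnS prednK ?addn_gt0 ?size_poly_gt0 ?L0 // ltn_add2l.
rewrite /ore_mul sizeT big_ord_recr /= lead_coefDr; last first.
  by rewrite size_scale ?lcT ?lead_coef_eq0 // size_top.
by rewrite lead_coefZ lc_top lcT.
Qed.

Lemma ore_mul_neq0 (T L : {poly K}) : T != 0 -> L != 0 -> omul T L != 0.
Proof.
move=> T0 L0; rewrite -lead_coef_eq0 lead_coef_ore_mul mulf_neq0 ?lead_coef_eq0 //.
by rewrite -lead_coef_eq0 in L0; elim: (size T).-1 => //= k; apply: s_neq0.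
Qed.

End OreLeadCoef.

Section Ideals.
Variables (R : comNzRingType) (I : R -> Prop).
Hypothesis I_ideal : is_ideal I.

Lemma ideal0 : I 0.
Proof. by case: I_ideal. Qed.

Lemma idealD a b : I a -> I b -> I (a + b).
Proof. by case: I_ideal => _ + _; apply. Qed.

Lemma idealMl r a : I a -> I (r * a).
Proof. by case: I_ideal => _ _; apply. Qed.

Lemma idealMr r a : I a -> I (a * r).
Proof. by rewrite mulrC; apply: idealMl. Qed.

Lemma idealB a b : I a -> I b -> I (a - b).
Proof. by move=> Ia Ib; rewrite -mulN1r; apply/idealD/idealMl. Qed.

Lemma ideal_sum (J : Type) (r : seq J) (Q : pred J) (F : J -> R) :
  (forall j, Q j -> I (F j)) -> I (\sum_(j <- r | Q j) F j).
Proof. by move=> IF; apply: big_ind => //; [apply: ideal0 | apply: idealD]. Qed.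

End Ideals.

Definition coefs_in (K : nzSemiRingType) (P : K -> Prop) (A : {poly K}) : Prop :=
  forall i, P A`_i.

Definition primeR (R : comUnitRingType) (p : R) : Prop :=
  p \isn't a GRing.unit /\ forall a b, dvdR p (a * b) -> dvdR p a \/ dvdR p b.

Section Divisibility.
Variable R : comNzRingType.

Lemma dvdR_ideal (c : R) : is_ideal (dvdR c).
Proof.
split=> [|_ _ [a ->] [b ->]|r _ [a ->]]; first by exists 0; rewrite mul0r.
  by exists (a + b); rewrite mulrDl.
by exists (r * a); rewrite mulrA.
Qed.

Lemma dvdR0 (c : R) : dvdR c 0.
Proof. exact: (ideal0 (dvdR_ideal c)). Qed.

Lemma dvdRD (c a b : R) : dvdR c a -> dvdR c b -> dvdR c (a + b).
Proof. exact: (idealD (dvdR_ideal c)). Qed.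

Lemma dvdRMl (c r a : R) : dvdR c a -> dvdR c (r * a).
Proof. exact: (idealMl (dvdR_ideal c)). Qed.

Lemma dvdRR (c : R) : dvdR c c.
Proof. by exists 1; rewrite mul1r. Qed.

Lemma dvdR_trans (a b c : R) : dvdR a b -> dvdR b c -> dvdR a c.
Proof. by move=> [x ->] [y ->]; exists (y * x); rewrite mulrA. Qed.

Lemma dvdR_polyC (c : R) (T : {poly R}) : dvdR c%:P T <-> coefs_in (dvdR c) T.
Proof.
split=> [[B ->] i|]; first by rewrite coefMC; exists B`_i.
elim/poly_ind: T => [|T a IH] cT; first by exists 0; rewrite mul0r.
have [B ->] : dvdR c%:P T.
  by apply: IH => i; have := cT i.+1; rewrite coefD coefMX coefC addr0.
have [b ->] : dvdR c a by have := cT 0%N; rewrite coefD coefMX coefC add0r.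
by exists (B * 'X + b%:P); rewrite mulrDl polyCM mulrAC.
Qed.

Lemma dvdR_polyCC (a b : R) : dvdR a%:P b%:P <-> dvdR a b.
Proof.
rewrite dvdR_polyC; split=> [/(_ 0%N)|ab i]; first by rewrite coefC.
by rewrite coefC; case: eqP => // _; apply: dvdR0.
Qed.

End Divisibility.

Lemma dvdR_polyC2 (R : comNzRingType) (c : R) (A : {poly {poly R}}) :
  dvdR c%:P%:P A <-> forall i j, dvdR c A`_i`_j.
Proof.
rewrite dvdR_polyC; split=> cA i; first by move=> j; have /dvdR_polyC := cA i; apply.
by apply/dvdR_polyC => j; apply: cA.
Qed.

Definition lead_term (K : nzSemiRingType) (A : {poly K}) : {poly K} :=
  lead_coef A *: 'X^((size A).-1).

Lemma size_sub_lead_term (K : nzRingType) (A : {poly K}) : A != 0 ->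
  (size (A - lead_term A)%R < size A)%N.
Proof.
move=> A0; have sA_gt0 : (0 < size A)%N by rewrite size_poly_gt0.
rewrite /lead_term -[size A]prednK //; apply/leq_sizeP => j le_j.
rewrite coefB coefZ coefXn; case: (ltngtP j (size A).-1) => [lt_j|gt_j|->].
- by move: le_j; rewrite leqNgt lt_j.
- by rewrite mulr0 subr0 nth_default // -(prednK sA_gt0).
- by rewrite mulr1 lead_coefE subrr.
Qed.

Section GaussIdeal.
Variables (K : comNzRingType) (P : K -> Prop).
Hypothesis P_ideal : is_ideal P.
Variable mul : {poly K} -> {poly K} -> {poly K}.
Hypothesis mulDl : forall A B C, mul (A + B) C = mul A C + mul B C.
Hypothesis mulDr : forall A B C, mul A (B + C) = mul A B + mul A C.
Hypothesis mulZl : forall a A B, mul (a *: A) B = a *: mul A B.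
Hypothesis mul_coefs_in : forall A B, coefs_in P B -> coefs_in P (mul A B).
Hypothesis lead_coef_mul_notin :
  forall A B, ~ P (lead_coef A) -> ~ P (lead_coef B) -> ~ P (lead_coef (mul A B)).

Lemma coefs_in_lead_term A : P (lead_coef A) -> coefs_in P (lead_term A).
Proof. by move=> PlA i; rewrite coefZ; apply: idealMr. Qed.

Lemma coefs_inB A B : coefs_in P A -> coefs_in P B -> coefs_in P (A - B).
Proof. by move=> PA PB i; rewrite coefB; apply: idealB. Qed.

Lemma not_coefs_in_sub_lead_term A :
  P (lead_coef A) -> ~ coefs_in P A -> ~ coefs_in P (A - lead_term A).
Proof.
move=> PlA nPA PA'; apply: nPA => i.
have -> : A = (A - lead_term A) + lead_term A by rewrite subrK.
by rewrite coefD; apply: idealD => //; apply: coefs_in_lead_term.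
Qed.

(* Induction on size A + size B: a leading term with coefficient in P can be split off without
   affecting either the hypotheses or the conclusion. *)
Lemma gauss_coefs_in A B : ~ coefs_in P A -> ~ coefs_in P B -> ~ coefs_in P (mul A B).
Proof.
have [n] := ubnP (size A + size B); elim: n => // n IH in A B *.
rewrite ltnS => le_AB nPA nPB PAB.
have nonzero C : ~ coefs_in P C -> C != 0.
  by apply: contra_notN => /eqP -> i; rewrite coef0; apply: ideal0.
have [PlA|nPlA] := classic (P (lead_coef A)).
  apply: (IH (A - lead_term A) B _ (not_coefs_in_sub_lead_term PlA nPA) nPB).
    by rewrite (leq_trans _ le_AB) // ltn_add2r size_sub_lead_term ?nonzero.
  have -> : mul (A - lead_term A) B = mul A B - mul (lead_term A) B.
    by apply/eqP; rewrite eq_sym subr_eq -mulDl subrK.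
  by apply: coefs_inB => //; rewrite mulZl => i; rewrite coefZ; apply: idealMr.
have [PlB|nPlB] := classic (P (lead_coef B)).
  apply: (IH A (B - lead_term B) _ nPA (not_coefs_in_sub_lead_term PlB nPB)).
    by rewrite (leq_trans _ le_AB) // ltn_add2l size_sub_lead_term ?nonzero.
  have -> : mul A (B - lead_term B) = mul A B - mul A (lead_term B).
    by apply/eqP; rewrite eq_sym subr_eq -mulDr subrK.
  by apply/coefs_inB/mul_coefs_in/coefs_in_lead_term.
by apply: (lead_coef_mul_notin nPlA nPlB); rewrite lead_coefE; apply: PAB.
Qed.

End GaussIdeal.

Section PID.
Variable R : idomainType.
Hypothesis R_pid : is_pid R.

Lemma pid_gcd (S : R -> Prop) : exists2 g : R,
  forall s, S s -> dvdR g s &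
  forall J, is_ideal J -> (forall s, S s -> J s) -> J g.
Proof.
pose gen x := forall J, is_ideal J -> (forall s, S s -> J s) -> J x.
have gen_ideal : is_ideal gen.
  split=> [J /ideal0 //|a b ga gb J J_ideal SJ|r a ga J J_ideal SJ].
    by apply: idealD (ga J J_ideal SJ) (gb J J_ideal SJ).
  exact: idealMl (ga J J_ideal SJ).
have [g gP] := R_pid gen_ideal.
exists g => [s Ss|]; first by apply/gP => J _; apply.
by apply/gP; apply: dvdRR.
Qed.

Lemma pid_ideal1 (S J : R -> Prop) : is_ideal J -> (forall s, S s -> J s) ->
  (forall r, (forall s, S s -> dvdR r s) -> r \is a GRing.unit) -> J 1.
Proof.
move=> J_ideal SJ S_coprime; have [g gS gJ] := pid_gcd S.
by rewrite -(mulVr (S_coprime g gS)); apply: (idealMl J_ideal); apply: gJ.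
Qed.

Lemma pid_dvdR_chain (f : nat -> R) :
  (forall n, dvdR (f n.+1) (f n)) -> exists n, dvdR (f n) (f n.+1).
Proof.
move=> f_chain.
have f_mono m n : (m <= n)%N -> dvdR (f n) (f m).
  move/subnK <-; elim: (n - m)%N => [|k IH]; first exact: dvdRR.
  exact: dvdR_trans (f_chain _) IH.
pose U x := exists n, dvdR (f n) x.
have U_ideal : is_ideal U.
  split=> [|a b [m ma] [n nb]|r a [n na]]; first by exists 0%N; apply: dvdR0.
    exists (maxn m n); apply: dvdRD.
      exact: dvdR_trans (f_mono _ _ (leq_maxl m n)) ma.
    exact: dvdR_trans (f_mono _ _ (leq_maxr m n)) nb.
  by exists n; apply: dvdRMl.
have [g gP] := R_pid U_ideal.
have [n fn_g] : U g by apply/gP; apply: dvdRR.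
by exists n; apply: dvdR_trans fn_g _; apply/gP; exists n.+1; apply: dvdRR.
Qed.

Definition irreducibleR (p : R) : Prop := p \isn't a GRing.unit /\
  forall a b, p = a * b -> a \is a GRing.unit \/ b \is a GRing.unit.

Lemma irreducibleR_prime (p : R) : irreducibleR p -> primeR p.
Proof.
move=> [p_nonunit p_irr]; split=> // a b p_ab.
have [|p_na] := classic (dvdR p a); [by left | right].
pose J x := exists u v, x = u * p + v * a.
have J_ideal : is_ideal J.
  split=> [|_ _ [u [v ->]] [u' [v' ->]]|r _ [u [v ->]]]; first by exists 0, 0; ring.
    by exists (u + u'), (v + v'); ring.
  by exists (r * u), (r * v); ring.
have [g gP] := R_pid J_ideal.
have [t p_tg] : dvdR g p by apply/gP; exists 1, 0; ring.
have [w a_wg] : dvdR g a by apply/gP; exists 0, 1; ring.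
have [t_unit|g_unit] := p_irr _ _ p_tg.
  by case: p_na; exists (w * t^-1); rewrite a_wg p_tg mulrA mulrVK.
have [u [v uv1]] : J 1 by apply/gP; exists g^-1; rewrite mulVr.
have -> : b = (u * b) * p + v * (a * b) by rewrite -{1}(mul1r b) uv1; ring.
by apply: dvdRD; [exists (u * b) | apply: dvdRMl].
Qed.

Lemma exists_irreducibleR_dvdR (r : R) :
  r != 0 -> r \isn't a GRing.unit -> exists2 p, irreducibleR p & dvdR p r.
Proof.
(* Otherwise every nonunit divisor of r has a proper nonunit divisor, and iterating a choice of
   one contradicts pid_dvdR_chain. *)
move=> r0 r_nonunit; apply: NNPP => no_irr.
pose good s := dvdR s r /\ s \isn't a GRing.unit.
have step s : exists a, good s -> [/\ good a, dvdR a s & ~ dvdR s a].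
  have [[s_r s_nonunit]|] := classic (good s); last by exists s.
  have s0 : s != 0 by apply: contraNneq r0 => s0; case: s_r => x ->; rewrite s0 mulr0.
  have [a [b [sab a_nonunit b_nonunit]]] : exists a b,
      [/\ s = a * b, a \isn't a GRing.unit & b \isn't a GRing.unit].
    apply: NNPP => no_fact; apply: no_irr; exists s => //; split=> // a b sab.
    apply: NNPP => /not_or_and [/negP a_nonunit /negP b_nonunit].
    by apply: no_fact; exists a, b.
  have a_s : dvdR a s by exists b; rewrite sab mulrC.
  exists a => _; split=> //; first by split=> //; apply: dvdR_trans a_s s_r.
  move=> [t a_ts]; move/negP: b_nonunit; apply; apply/unitrPr; exists t.
  by apply: (mulfI s0); rewrite mulr1 {2}sab a_ts; ring.
pose next s := epsilon (inhabits 0) (fun a => good s -> [/\ good a, dvdR a s & ~ dvdR s a]).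
have nextP s : good s -> [/\ good (next s), dvdR (next s) s & ~ dvdR s (next s)].
  exact: epsilon_spec (step s).
pose f n := iter n next r.
have f_good n : good (f n).
  by elim: n => [|n /nextP []] //; split=> //; apply: dvdRR.
have f_chain n : dvdR (f n.+1) (f n) by have [] := nextP _ (f_good n).
have [n] := pid_dvdR_chain f_chain.
by have [] := nextP _ (f_good n).
Qed.

Lemma exists_primeR_dvdR (r : R) :
  r != 0 -> r \isn't a GRing.unit -> exists2 p, primeR p & dvdR p r.
Proof.
move=> r0 r_nonunit; have [p /irreducibleR_prime] := exists_irreducibleR_dvdR r0 r_nonunit.
by exists p.
Qed.

End PID.

Lemma primeR_polyC (R : idomainType) (p : R) : primeR p -> primeR p%:P.
Proof.
move=> [p_nonunit p_prime]; split=> [|f g].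
  by rewrite poly_unitE coefC eqxx (negbTE p_nonunit) andbF.
rewrite !dvdR_polyC => pfg; apply: NNPP => /not_or_and [nf ng].
apply: (gauss_coefs_in (dvdR_ideal p) (mul := *%R) _ _ _ _ _ nf ng pfg).
- exact: mulrDl.
- exact: mulrDr.
- by move=> a A B; rewrite scalerAl.
- by move=> A B; rewrite -!dvdR_polyC => -[B' ->]; exists (A * B'); rewrite mulrA.
- by move=> A B nA nB; rewrite lead_coefM => /p_prime [].
Qed.

Section OreGauss.
Variable R : idomainType.
Variables (s d : {poly R} -> {poly R}).
Hypotheses (s_add : {morph s : x y / x + y}) (d_add : {morph d : x y / x + y}).
Hypothesis s_neq0 : forall f, f != 0 -> s f != 0.
Hypothesis s_dvdR : forall (c : R) f, dvdR c%:P (s f) <-> dvdR c%:P f.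
Hypothesis d_dvdR : forall (c : R) f, dvdR c%:P f -> dvdR c%:P (d f).
Local Notation omul := (ore_mul s d).

Lemma ore_mul_coefs_in (c : R) (A B : {poly {poly R}}) :
  coefs_in (dvdR c%:P) B -> coefs_in (dvdR c%:P) (omul A B).
Proof.
have iter_coefs_in k :
    coefs_in (dvdR c%:P) B -> coefs_in (dvdR c%:P) (iter k (ore_dmul s d) B).
  elim: k => //= k IH /IH cB i; rewrite coef_ore_dmul //; apply: dvdRD; last exact: d_dvdR.
  by case: eqP => _; [apply: dvdR0 | apply/s_dvdR].
move=> cB i; rewrite coef_sum; apply: (ideal_sum (dvdR_ideal _)) => j _.
by rewrite coefZ; apply/dvdRMl/iter_coefs_in.
Qed.

Lemma primeR_ore_mul (p : R) : primeR p -> forall A B : {poly {poly R}},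
  dvdR p%:P%:P (omul A B) -> dvdR p%:P%:P A \/ dvdR p%:P%:P B.
Proof.
move=> /primeR_polyC [_ pP_prime] A B; rewrite !dvdR_polyC => pAB.
apply: NNPP => /not_or_and [nA nB].
apply: (gauss_coefs_in (dvdR_ideal p%:P) (mul := omul) _ _ _ _ _ nA nB pAB).
- exact: ore_mulDl.
- by move=> *; apply: ore_mulDr.
- exact: ore_mulZl.
- exact: ore_mul_coefs_in.
move=> A' B' nA' nB'; rewrite lead_coef_ore_mul ?morph_add0 //.
case/pP_prime => //; elim: (size A').-1 => //= k IH /s_dvdR; exact: IH.
Qed.

End OreGauss.

Section PrimitiveOre.
Variable R : idomainType.
Hypothesis R_pid : is_pid R.
Variables (s d : {poly R} -> {poly R}).
Hypotheses (s_add : {morph s : x y / x + y}) (d_add : {morph d : x y / x + y}).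
Hypothesis s_neq0 : forall f, f != 0 -> s f != 0.
Hypothesis s_dvdR : forall (c : R) f, dvdR c%:P (s f) <-> dvdR c%:P f.
Hypothesis d_dvdR : forall (c : R) f, dvdR c%:P f -> dvdR c%:P (d f).
Local Notation omul := (ore_mul s d).
Let s0 : s 0 = 0 := morph_add0 s_add.

Lemma R_primitiveP (A : {poly {poly R}}) :
  R_primitive A <-> forall r, dvdR r%:P%:P A -> r \is a GRing.unit.
Proof. by split=> A_prim r /dvdR_polyC2; apply: A_prim. Qed.

Lemma R_primitive_neq0 (A : {poly {poly R}}) : R_primitive A -> A != 0.
Proof.
move/R_primitiveP => A_prim; apply/eqP => A0.
suff : (0 : R) \is a GRing.unit by rewrite unitr0.
by apply: A_prim; rewrite A0; apply: dvdR0.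
Qed.

Lemma R_primitive_decomposition (A : {poly {poly R}}) : A != 0 ->
  exists g A', [/\ g != 0, A = g%:P *: A' & R_primitive A'].
Proof.
move=> A0; have [g gA gJ] := pid_gcd R_pid (fun x => exists i j, x = A`_i`_j).
have [A' defA] : dvdR g%:P%:P A by apply/dvdR_polyC2 => i j; apply: gA; exists i, j.
have g0 : g != 0 by apply: contraNneq A0 => g0; rewrite defA g0 mulr0.
exists g, A'; split=> //; first by rewrite defA mulrC mul_polyC.
move=> r r_div; have [t g_trg] : dvdR (r * g) g.
  apply: (gJ _ (dvdR_ideal _)) => _ [i [j ->]]; rewrite defA !coefMC.
  by have [u ->] := r_div i j; exists u; rewrite mulrA.
by apply/unitrPr; exists t; apply: (mulIf g0); rewrite mul1r {2}g_trg; ring.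
Qed.

Lemma R_primitive_ore_mul (A L : {poly {poly R}}) :
  R_primitive A -> R_primitive L -> R_primitive (omul A L).
Proof.
move=> A_prim L_prim; apply/R_primitiveP => r r_AL.
have [//|r_nonunit] := boolP (r \is a GRing.unit).
have [r0|r_neq0] := eqVneq r 0.
  have := ore_mul_neq0 d s0 s_neq0 (R_primitive_neq0 A_prim) (R_primitive_neq0 L_prim).
  by case: r_AL => B ->; rewrite r0 !polyC0 mulr0 eqxx.
have [p p_prime p_r] := exists_primeR_dvdR R_pid r_neq0 r_nonunit.
have p_AL : dvdR p%:P%:P (omul A L).
  by apply/dvdR_polyC2 => i j; apply: dvdR_trans p_r _; move/dvdR_polyC2: r_AL; apply.
have [/negP p_nonunit _] := p_prime; case: p_nonunit.
by case: (primeR_ore_mul s_add d_add s_neq0 s_dvdR d_dvdR p_prime p_AL);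
  [move/R_primitiveP: A_prim | move/R_primitiveP: L_prim]; apply.
Qed.

Lemma dvdR_scale_R_primitive (c g : R) (M : {poly {poly R}}) :
  R_primitive M -> dvdR c%:P%:P (g%:P *: M) -> dvdR c g.
Proof.
move=> M_prim /dvdR_polyC2 c_gM.
have J_ideal : is_ideal (fun x => dvdR c (g * x)).
  split=> [|a b ca cb|r a ca]; first by rewrite mulr0; apply: dvdR0.
    by rewrite mulrDr; apply: dvdRD.
  by rewrite mulrCA; apply: dvdRMl.
rewrite -[g]mulr1; apply: (pid_ideal1 R_pid (S := fun x => exists i j, x = M`_i`_j) J_ideal).
  by move=> _ [i [j ->]]; have := c_gM i j; rewrite coefZ coefCM.
by move=> r r_div; apply: M_prim => i j; apply: r_div; exists i, j.
Qed.

Lemma dvdR_ore_mul_R_primitive (c : R) (A L : {poly {poly R}}) :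
  R_primitive L -> dvdR c%:P%:P (omul A L) -> dvdR c%:P%:P A.
Proof.
move=> L_prim c_AL; have [->|A0] := eqVneq A 0; first exact: dvdR0.
have [g [A' [_ defA A'_prim]]] := R_primitive_decomposition A0.
have [t g_tc] : dvdR c g.
  apply: (dvdR_scale_R_primitive (R_primitive_ore_mul A'_prim L_prim)).
  by rewrite -ore_mulZl -defA.
by exists (t%:P%:P * A'); rewrite defA g_tc -mul_polyC !polyCM mulrAC.
Qed.

End PrimitiveOre.

(* Gauss's lemma in R[x], as the case σ = id, δ = 0 of the Ore version on constant operators. *)
Lemma dvdR_mul_R_primitive (R : idomainType) (R_pid : is_pid R) (c : R) (e f : {poly R}) :
  R_primitive e%:P -> dvdR c%:P (e * f) -> dvdR c%:P f.
Proof.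
move=> e_prim c_ef; rewrite -dvdR_polyCC.
apply: (@dvdR_ore_mul_R_primitive _ R_pid id (fun=> 0)) e_prim _ => //.
- by move=> *; rewrite addr0.
- by move=> *; apply: dvdR0.
by rewrite ore_mulCC dvdR_polyCC mulrC.
Qed.

Local Notation "x %:F" := (@FracField.tofrac _ x).

Section FractionRepresentatives.
Variable D : idomainType.

Lemma fden_neq0 (x : {fraction D}) : fden x != 0.
Proof. exact: denom_ratioP. Qed.

Lemma mul_fden (x : {fraction D}) : x * (fden x)%:F = (fnum x)%:F.
Proof.
rewrite /fden /fnum -{1}[x]reprK; set r := repr x.
unlock FracField.tofrac; rewrite /= !piE; apply/eqmodP => /=.
rewrite FracField.equivfE /= !numden_Ratio ?mulf_neq0 ?denom_ratioP ?oner_neq0 //.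
by rewrite !mulr1 mulrC.
Qed.

Lemma tofrac_inj : injective (@FracField.tofrac D).
Proof. by move=> x y /eqP; rewrite tofrac_eq => /eqP. Qed.

Lemma fnum_tofrac (f : D) : fnum f%:F = f * fden f%:F.
Proof. by apply: tofrac_inj; rewrite -mul_fden rmorphM. Qed.

Lemma poly_frac_common_den (T : {poly {fraction D}}) :
  exists2 e : D, e != 0 & exists T' : {poly D}, e%:F *: T = map_poly (@FracField.tofrac D) T'.
Proof.
elim/poly_ind: T => [|T a [e e0 [T' eT]]].
  by exists 1; [apply: oner_neq0 | exists 0; rewrite scaler0 rmorph0].
exists (e * fden a); first by rewrite mulf_neq0 ?fden_neq0.
exists ((fden a)%:P * T' * 'X + (e * fnum a)%:P).
rewrite !rmorphD !rmorphM /= map_polyX !map_polyC /= -eT -mul_fden.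
by rewrite -!mul_polyC !polyCM; ring.
Qed.

End FractionRepresentatives.

Section Content.
Variable R : idomainType.
Hypothesis R_pid : is_pid R.
Variable sigma : {poly R} -> {poly R}.
Hypothesis sigma_add : forall p q, sigma (p + q) = sigma p + sigma q.
Hypothesis sigma_mul : forall p q, sigma (p * q) = sigma p * sigma q.
Hypothesis sigma_1 : sigma 1 = 1.
Hypothesis sigma_Rlin : forall (a : R) p, sigma (a *: p) = a *: sigma p.
Hypothesis sigma_bij : bijective sigma.
Variable delta : {poly R} -> {poly R}.
Hypothesis delta_add : forall p q, delta (p + q) = delta p + delta q.
Hypothesis delta_Rlin : forall (a : R) p, delta (a *: p) = a *: delta p.
Hypothesis delta_mul : forall f g, delta (f * g) = sigma f * delta g + delta f * g.
Local Notation tf := (@FracField.tofrac {poly R}).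
Local Notation omul := (ore_mul sigma delta).

Let sigma0 : sigma 0 = 0 := morph_add0 sigma_add.
Let delta0 : delta 0 = 0 := morph_add0 delta_add.

Lemma sigma_neq0 f : f != 0 -> sigma f != 0.
Proof.
by move=> f0; apply: contraNneq f0 => sf0; apply/eqP/(bij_inj sigma_bij); rewrite sf0 sigma0.
Qed.

Lemma sigmaC (a : R) : sigma a%:P = a%:P.
Proof. by rewrite -[a%:P]mulr1 mul_polyC sigma_Rlin sigma_1. Qed.

Lemma deltaC (a : R) : delta a%:P = 0.
Proof.
have delta1 : delta 1 = 0.
  have := delta_mul 1 1; rewrite !mulr1 sigma_1 mul1r.
  by move/(congr1 (fun x => x - delta 1)); rewrite addrK subrr => <-.
by rewrite -[a%:P]mulr1 mul_polyC delta_Rlin delta1 scaler0.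
Qed.

Lemma sigma_dvdR (c : R) f : dvdR c%:P (sigma f) <-> dvdR c%:P f.
Proof.
have [sigma' sigmaK sigma'K] := sigma_bij.
split=> [[b fb]|[b ->]]; last by exists (sigma b); rewrite sigma_mul sigmaC.
by exists (sigma' b); apply: (bij_inj sigma_bij); rewrite fb sigma_mul sigmaC sigma'K.
Qed.

Lemma delta_dvdR (c : R) f : dvdR c%:P f -> dvdR c%:P (delta f).
Proof. by case=> b ->; exists (delta b); rewrite delta_mul deltaC mulr0 add0r. Qed.

Lemma sigmaF_tofrac f : sigmaF sigma (tf f) = tf (sigma f).
Proof.
have sden0 : tf (sigma (fden (tf f))) != 0 by rewrite tofrac_eq0 sigma_neq0 ?fden_neq0.
by rewrite /sigmaF fnum_tofrac sigma_mul rmorphM mulfK.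
Qed.

Lemma deltaF_tofrac f : deltaF sigma delta (tf f) = tf (delta f).
Proof.
have sden0 : tf (sigma (fden (tf f))) != 0 by rewrite tofrac_eq0 sigma_neq0 ?fden_neq0.
have den0 : tf (fden (tf f)) != 0 by rewrite tofrac_eq0 fden_neq0.
rewrite /deltaF fnum_tofrac delta_mul sigma_mul !rmorphD !rmorphM /=.
have quotient_rule (F : fieldType) (a b c S M : F) : S != 0 -> M != 0 ->
    (a * c + b * M) / M - a * S * c / (S * M) = b.
  by move=> S0 M0; field; rewrite S0 M0.
exact: (quotient_rule _ _ _ _ _ _ sden0 den0).
Qed.

Lemma in_cont_common_den (L Q : {poly {poly R}}) : in_cont sigma delta L Q ->
  exists2 e : {poly R}, e != 0 & exists T, e *: Q = omul T L.
Proof.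
case=> T QTL; have [e e0 [T' eT]] := poly_frac_common_den T.
exists e => //; exists T'; apply: (map_inj_poly (@tofrac_inj _) (rmorph0 _)).
rewrite map_polyZ QTL -ore_mulZl eT.
by rewrite (map_ore_mul sigma0 delta0 sigmaF_tofrac deltaF_tofrac).
Qed.

Lemma in_cont_primitive_cofactor (L Q : {poly {poly R}}) :
  R_primitive L -> in_cont sigma delta L Q ->
  exists e T, R_primitive e%:P /\ e *: Q = omul T L.
Proof.
(* Write the common denominator as g e with g in R and e R-primitive; g divides T0 by Gauss's
   lemma and cancels. *)
move=> L_prim /in_cont_common_den [dd dd0 [T0 ddQ]].
have ddP0 : dd%:P != 0 by rewrite polyC_eq0.
have [g [D [g0 dd_gD D_prim]]] := R_primitive_decomposition R_pid ddP0.
have gP0 : g%:P != 0 by rewrite polyC_eq0.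
have DC : D = (D`_0)%:P.
  by apply: size1_polyC; rewrite -(size_scale D gP0) -dd_gD size_polyC leq_b1.
set e := D`_0 in DC.
have dd_ge : dd = g%:P * e by apply: polyC_inj; rewrite dd_gD DC scale_polyC.
have [T defT0] : dvdR g%:P%:P T0.
  apply: (dvdR_ore_mul_R_primitive R_pid sigma_add delta_add sigma_neq0 sigma_dvdR delta_dvdR
    L_prim).
  by rewrite -ddQ dd_ge -scalerA; exists (e *: Q); rewrite mulrC mul_polyC.
exists e, T; split; first by rewrite -DC.
apply: (mulfI (_ : g%:P%:P != 0)); first by rewrite !polyC_eq0.
by rewrite !mul_polyC scalerA -dd_ge ddQ defT0 mulrC mul_polyC ore_mulZl.
Qed.

Lemma in_cont_lead_coef_dvdR (L Q : {poly {poly R}}) (c : R) :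
  R_primitive L -> dvdRP c (lead_coef L) -> in_cont sigma delta L Q ->
  dvdRP c (lead_coef Q).
Proof.
move=> L_prim [b lcL] /(in_cont_primitive_cofactor L_prim) [e [T [e_prim eQ]]].
apply: (dvdR_mul_R_primitive R_pid e_prim).
rewrite -lead_coefZ eQ (lead_coef_ore_mul _ sigma0 sigma_neq0) lcL.
have -> k : iter k sigma (b * c%:P) = iter k sigma b * c%:P.
  by elim: k => //= k ->; rewrite sigma_mul sigmaC.
by rewrite mulrA; exists (lead_coef T * iter (size T).-1 sigma b).
Qed.

End Content.

Theorem mainTheorem4 (R : idomainType) (R_pid : is_pid R)
  (gamma tau : R) (gamma_unit : gamma \is a GRing.unit)
  (sigma : {poly R} -> {poly R})
  (sigma_add : forall p q, sigma (p + q) = sigma p + sigma q)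
  (sigma_mul : forall p q, sigma (p * q) = sigma p * sigma q)
  (sigma_1 : sigma 1 = 1)
  (sigma_Rlin : forall (a : R) p, sigma (a *: p) = a *: sigma p)
  (sigma_bij : bijective sigma)
  (sigma_X : sigma 'X = gamma *: 'X + tau%:P)
  (delta : {poly R} -> {poly R})
  (delta_add : forall p q, delta (p + q) = delta p + delta q)
  (delta_Rlin : forall (a : R) p, delta (a *: p) = a *: delta p)
  (delta_mul : forall f g, delta (f * g) = sigma f * delta g + delta f * g)
  (delta_X : (size (delta 'X) <= 2)%N)
  (L : {poly {poly R}}) (L_ord : (1 < size L)%N)
  (c : R) (c_nonunit : c \isn't a GRing.unit)
  (L_prim : R_primitive L)
  (c_lc : dvdRP c (lead_coef L)) :
  forall Q : {poly {poly R}}, Q != 0 -> in_cont sigma delta L Q ->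
    dvdRP c (lead_coef Q).
Proof.
move=> Q _.
exact: (in_cont_lead_coef_dvdR R_pid sigma_add sigma_mul sigma_1 sigma_Rlin sigma_bij
  delta_add delta_Rlin delta_mul L_prim c_lc).
Qed.
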